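(* Let $N\ge 2m\ge 0$ be integers. Then, as a polynomial in $j$, $\Delta(N,m)$ can be written as \[\Delta(N,m)=u\,(s_0+s_1v+\cdots+s_kv^k),\qquad s_0,\dots,s_k\in\mathbb{Q},\] with $k\le\big[\frac{2N-3m-1}{2}\big]$, where $u=2j-1$, $v=j(j-1)$. Moreover, if $(N,m)\ne(2,1)$, then $s_0=0$.
   Context: For positive integers $j$ let $\sigma_0(j)=1$, $\sigma_i(j)=\sum_{1\le n_1<\cdots<n_i\le j-1}n_1\cdots n_i$ for $1\le i\le j-1$ and $\sigma_i(j)=0$ for $i\ge j$; let $Q_0(j)=1$ and $Q_k(j)=-\sum_{i=1}^k\sigma_i(j)Q_{k-i}(j)$ for $k\ge1$. For each fixed index these agree on positive integers with polynomials in $j$, and are identified with them. $\binom{\alpha}{m}=\alpha(\alpha-1)\cdots(\alpha-m+1)/m!$ is the generalized binomial coefficient. For $N\ge 2m$ define \[\Delta(N,m)=\binom{j}{m}Q_{N-2m}(j)-(-1)^N\binom{1-j}{m}\sigma_{N-2m}(j),\] a polynomial in $j$ with rational coefficients. $[x]$ denotes the integer part. *)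

From HB Require Import structures.
From mathcomp Require Import all_boot all_order all_algebra.
Set Implicit Arguments. Unset Strict Implicit. Unset Printing Implicit Defensive.
Import Order.TTheory GRing.Theory Num.Theory.
Local Open Scope ring_scope.

(* sigma_i(j) = sum over 1 <= n_1 < ... < n_i <= j-1 of n_1 ... n_i,
   i.e. the sum, over the i-element subsets A of {1,...,j-1} (viewed inside
   'I_j = {0,...,j-1}, avoiding 0), of prod_{n in A} n.
   This gives sigma_0(j) = 1 and sigma_i(j) = 0 for i >= j, as in the paper. *)
Definition sigma (i j : nat) : rat :=
  \sum_(A : {set 'I_j} | (#|A| == i) && [forall n in A, (0 < (n : nat))%N])
     \prod_(n in A) (n : nat)%:R.

Fixpoint Qs (k j : nat) : seq rat :=
  match k with
  | 0 => [:: 1]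
  | k'.+1 => rcons (Qs k' j)
      (- \sum_(1 <= i < k'.+2) sigma i j * nth 0 (Qs k' j) (k'.+1 - i))
  end.

Definition Q (k j : nat) : rat := nth 0 (Qs k j) k.

Definition gbinom (a : rat) (m : nat) : rat :=
  (\prod_(i < m) (a - i%:R)) / (m`!)%:R.

Definition Delta (N m j : nat) : rat :=
  gbinom j%:R m * Q (N - 2 * m) j
  - (-1) ^+ N * gbinom (1 - j%:R) m * sigma (N - 2 * m) j.

From HB Require Import structures.
From mathcomp Require Import all_boot all_algebra.
From mathcomp Require Import zify ring.

Set Implicit Arguments.
Unset Strict Implicit.
Unset Printing Implicit Defensive.

Import GRing.Theory Num.Theory.
Local Open Scope ring_scope.

(* Let S_n be the polynomial with S_n(j) = sigma_n(j) for every j.  It exists,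
   with deg S_n <= 2n, because the generating polynomial of the sigma_k(j) is
   prod_(i<j) (1 + iX), whence sigma_(n+1)(j+1) - sigma_(n+1)(j) = j sigma_n(j)
   and S_(n+1) is an antidifference of X S_n.  Read backwards in j, the same
   recurrence shows that (-1)^k S_k(1 - j) satisfies the convolution identity
   defining Q_k(j), so Q_k(j) = (-1)^k S_k(1 - j).  With n = N - 2m and
   B(x) = binom(x, m) this gives
     Delta(N, m)(x) = (-1)^n (B(x) S_n(1 - x) - B(1 - x) S_n(x)),
   a polynomial of degree <= m + 2n that changes sign under x |-> 1 - x.  It
   therefore vanishes at 1/2, and its quotient by 2x - 1 is invariant under
   x |-> 1 - x, hence a polynomial in x(x - 1).  Finally s_0 = Delta(N, m)(1),
   and at j = 1 both terms of Delta vanish unless (N, m) = (2, 1). *)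

Section ForwardDifference.
Variable R : numFieldType.
Implicit Types (p q : {poly R}) (x : R).

Definition fdiff p : {poly R} := p \Po ('X + 1) - p.

Lemma horner_fdiff p x : (fdiff p).[x] = p.[x + 1] - p.[x].
Proof. by rewrite !hornerE horner_comp !hornerE. Qed.

Lemma fdiffD p q : fdiff (p + q) = fdiff p + fdiff q.
Proof. by rewrite /fdiff comp_polyD; ring. Qed.

Lemma fdiffZ (a : R) p : fdiff (a *: p) = a *: fdiff p.
Proof. by rewrite /fdiff comp_polyZ scalerBr. Qed.

Lemma coef_fdiffXn n k :
  (fdiff 'X^(n.+1))`_k = if (k <= n)%N then 'C(n.+1, k)%:R else 0.
Proof.
rewrite /fdiff comp_Xn_poly exprD1n big_ord_recr /= binn mulr1n addrK coef_sum.
under eq_bigr do rewrite coefMn coefXn eq_sym.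
case: leqP => [le_kn | lt_nk].
  rewrite (bigD1 (Ordinal (le_kn : (k < n.+1)%N))) //= eqxx.
  rewrite big1 ?addr0 //.
  by move=> i; rewrite -val_eqE /= => /negbTE ->; rewrite mul0rn.
by rewrite big1 // => i _; rewrite (ltn_eqF (leq_trans (ltn_ord i) lt_nk)) mul0rn.
Qed.

Fixpoint antidiff n q : {poly R} :=
  if n is n'.+1 then
    let a := q`_n' / n'.+1%:R in
    a *: 'X^(n'.+1) + antidiff n' (q - a *: fdiff 'X^(n'.+1))
  else 0.

Lemma size_antidiff n q : (size (antidiff n q) <= n.+1)%N.
Proof.
elim: n q => [|n IHn] q /=; first by rewrite size_poly0.
apply: leq_trans (size_polyD _ _) _; rewrite geq_max (leqW (IHn _)) andbT.
by apply: leq_trans (size_scale_leq _ _) _; rewrite size_polyXn.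
Qed.

Lemma fdiff_antidiff n q : (size q <= n)%N -> fdiff (antidiff n q) = q.
Proof.
elim: n q => [|n IHn] q /= size_q.
  by move/size_poly_leq0P: size_q ->; rewrite /fdiff comp_poly0 subr0.
set a := q`_n / n.+1%:R.
have size_rest : (size (q - a *: fdiff 'X^(n.+1))%R <= n)%N.
  apply/leq_sizeP => k le_nk; rewrite coefB coefZ coef_fdiffXn.
  case: ltngtP le_nk => // [lt_nk | <-] _; last first.
    by rewrite binSn /a mulfVK ?subrr // pnatr_eq0.
  by rewrite mulr0 subr0; move/leq_sizeP: size_q => ->.
by rewrite fdiffD fdiffZ IHn // addrC subrK.
Qed.
End ForwardDifference.

Arguments antidiff : simpl never.

Section Mirror.
Variable R : idomainType.
Implicit Types (p q : {poly R}) (x : R).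

Definition mirror : {poly R} -> {poly R} := comp_poly (1 - 'X).
HB.instance Definition _ := GRing.RMorphism.copy mirror (comp_poly (1 - 'X)).

Lemma horner_mirror p x : (mirror p).[x] = p.[1 - x].
Proof. by rewrite horner_comp !hornerE. Qed.

Lemma mirrorC (c : R) : mirror c%:P = c%:P.
Proof. exact: comp_polyC. Qed.

Lemma mirrorZ (c : R) p : mirror (c *: p) = c *: mirror p.
Proof. exact: comp_polyZ. Qed.

Lemma mirrorX : mirror 'X = 1 - 'X.
Proof. exact: comp_polyX. Qed.

Lemma mirrorK : involutive mirror.
Proof.
have mirror_1subX : mirror (1 - 'X) = 'X.
  by rewrite rmorphB rmorph1 /= mirrorX subKr.
move=> p; rewrite /mirror -comp_polyA -[(1 - 'X) \Po _]/(mirror _).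
by rewrite mirror_1subX comp_polyXr.
Qed.

Lemma size_mirror p : size (mirror p) = size p.
Proof.
by apply: size_comp_poly2; rewrite -opprB -polyC1 size_polyN size_XsubC.
Qed.

Lemma mirror_invariant_factor p : mirror p = p ->
  exists2 r, mirror r = r & p = p.[0]%:P + r * ('X * ('X - 1)).
Proof.
move=> mirror_p; set w : {poly R} := 'X * ('X - 1); set c := p.[0].
have root0 : root (p - c%:P) 0 by rewrite /root !hornerE subrr.
have [r0 def_p0] := factor_theorem _ _ root0.
have root1 : root r0 1.
  have : (p - c%:P).[1] = 0.
    by rewrite !hornerE -mirror_p horner_mirror subrr /c subrr.
  by rewrite def_p0 !hornerE subr0 mulr1 => /eqP.
have [r def_r0] := factor_theorem _ _ root1.
have def_p : p = c%:P + r * w.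
  by rewrite -[p](subrK c%:P) def_p0 def_r0 polyC0 subr0 polyC1 /w; ring.
exists r => //.
have w_neq0 : w != 0 by rewrite mulf_neq0 ?polyX_eq0 // -polyC1 polyXsubC_eq0.
have mirror_w : mirror w = w.
  by rewrite /w rmorphM rmorphB rmorph1 /= mirrorX; ring.
have := congr1 mirror def_p.
rewrite mirror_p rmorphD rmorphM /= mirrorC mirror_w {1}def_p.
by move=> /addrI /(mulIf w_neq0).
Qed.

Lemma size_polyC_add_mulXsubX (c : R) r : r != 0 ->
  size (c%:P + r * ('X * ('X - 1))) = (size r).+2.
Proof.
move=> r_neq0; have w_monic : ('X * ('X - 1) : {poly R}) \is monic.
  by rewrite monicMl ?monicX // -polyC1 monicXsubC.
have size_rw : size (r * ('X * ('X - 1))) = (size r).+2.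
  rewrite size_Mmonic // mulrC -polyC1 size_mulX ?polyXsubC_eq0 //.
  by rewrite size_XsubC addn3.
by rewrite addrC size_polyDl size_rw // (leq_ltn_trans (size_polyC_leq1 c)).
Qed.

Lemma mirror_invariant_comp p : mirror p = p ->
  exists2 q : {poly R}, (size q <= (size p).+1./2)%N &
    p = q \Po ('X * ('X - 1)).
Proof.
have [n] := ubnP (size p); elim: n p => // n IHn p /ltnSE size_p mirror_p.
have [-> | p_neq0] := eqVneq p 0.
  by exists 0; rewrite ?size_poly0 ?comp_poly0.
have p_gt0 : (0 < size p)%N by rewrite lt0n size_poly_eq0.
have [r mirror_r def_p] := mirror_invariant_factor mirror_p.
set c := p.[0] in def_p; set w : {poly R} := 'X * ('X - 1) in def_p *.
have size_r : r = 0 \/ (size r).+2 = size p.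
  have [-> | r_neq0] := eqVneq r 0; [by left | right].
  by rewrite def_p size_polyC_add_mulXsubX.
have [qr size_qr def_r] : exists2 qr : {poly R},
    (size qr <= (size r).+1./2)%N & r = qr \Po w.
  apply: IHn mirror_r; case: size_r => [-> | eq_rp].
    by rewrite size_poly0; apply: leq_trans size_p.
  by apply: leq_trans size_p; rewrite -eq_rp leqnSn.
exists (c%:P + 'X * qr); last first.
  by rewrite def_p comp_polyD comp_polyC comp_polyM comp_polyX -def_r mulrC.
have size_q : (size (c%:P + 'X * qr)%R <= (size qr).+1)%N.
  by rewrite mulrC addrC size_MXaddC; case: ifP.
apply: leq_trans size_q _; case: size_r => [r_eq0 | <-]; last exact: size_qr.
move: size_qr; rewrite r_eq0 size_poly0 leqn0 => /eqP ->.
exact: (half_leq (_ : 2 <= (size p).+1)%N).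
Qed.
End Mirror.

Section MirrorAnti.
Variable F : fieldType.
Hypothesis two_neq0 : 2 != 0 :> F.
Implicit Types p q : {poly F}.

Lemma mirror_anti_comp p : mirror p = - p ->
  exists2 q : {poly F}, (size q <= (size p)./2)%N &
    p = ('X *+ 2 - 1) * (q \Po ('X * ('X - 1))).
Proof.
move=> mirror_p; set h : F := 2^-1.
have two_h : h *+ 2 = 1 by rewrite -mulr_natr mulVf.
have root_h : root p h.
  have half_fixed : 1 - h = h by rewrite -{1}two_h mulr2n addrK.
  have : p.[h] *+ 2 = 0.
    by rewrite mulr2n -{1}half_fixed -horner_mirror mirror_p hornerN addNr.
  by rewrite -mulr_natr => /eqP; rewrite mulf_eq0 (negbTE two_neq0) orbF.
have [r def_p] := factor_theorem _ _ root_h.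
have lin_monic : 'X - h%:P \is monic by apply: monicXsubC.
have mirror_r : mirror r = r.
  have lin_neq0 : 'X - h%:P != 0 by apply: monic_neq0.
  have mirror_lin : mirror ('X - h%:P) = - ('X - h%:P).
    rewrite rmorphB /= mirrorX mirrorC -[1](polyC1 F) -two_h polyCMn.
    by rewrite mulr2n; ring.
  move: mirror_p; rewrite def_p rmorphM /= mirror_lin mulrN.
  by move=> /oppr_inj /(mulIf lin_neq0).
have [q0 size_q0 def_r] := mirror_invariant_comp mirror_r.
exists (h *: q0).
  apply: leq_trans (size_scale_leq _ _) _; apply: leq_trans size_q0 _.
  have [-> | r_neq0] := eqVneq r 0; first by rewrite size_poly0.
  by rewrite def_p size_Mmonic // size_XsubC addn2.
have lin_eq : ('X *+ 2 - 1) * h%:P = 'X - h%:P.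
  by rewrite mulrBl mul1r mulrnAl -mulrnAr -polyCMn two_h mulr1.
by rewrite comp_polyZ -def_r -mul_polyC mulrA lin_eq mulrC.
Qed.
End MirrorAnti.

Definition sigma_gen j : {poly rat} := \prod_(i < j) (i%:R%:P * 'X + 1).

Lemma coef_sigma_gen k j : (sigma_gen j)`_k = sigma k j.
Proof.
rewrite /sigma_gen bigA_distr coef_sum /sigma [RHS]big_mkcond /=.
apply: eq_bigr => A _.
rewrite -big_mkcond /= big_split /= prodr_const -rmorph_prod coefCM coefXn.
rewrite [#|A| == k]eq_sym; case: (k == #|A|); last by rewrite mulr0.
rewrite mulr1 /=; case: ifP => // /negbT; rewrite negb_forall.
case/existsP => n; rewrite negb_imply -leqNgt leqn0 => /andP [nA /eqP n_eq0].
by rewrite (bigD1 n) //= n_eq0 mul0r.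
Qed.

Lemma sigma0 j : sigma 0 j = 1.
Proof.
rewrite -coef_sigma_gen /sigma_gen.
elim: j => [|j IHj]; first by rewrite big_ord0 coefC.
by rewrite big_ord_recr /= mulrDr mulr1 coefD mulrA coefMX IHj.
Qed.

Lemma sigmaS0 k : sigma k.+1 0 = 0.
Proof. by rewrite -coef_sigma_gen /sigma_gen big_ord0 coefC. Qed.

Lemma sigmaSS k j : sigma k.+1 j.+1 = sigma k.+1 j + j%:R * sigma k j.
Proof.
rewrite -!coef_sigma_gen /sigma_gen big_ord_recr /= mulrDr mulr1 coefD addrC.
by rewrite mulrA coefMX /= coefMC mulrC.
Qed.

Lemma sigma_1 k : sigma k 1 = (k == 0)%:R.
Proof. by case: k => [|k]; rewrite ?sigma0 // sigmaSS sigmaS0 mul0r addr0. Qed.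

Fixpoint sigma_poly n : {poly rat} :=
  if n is n'.+1 then
    let r := antidiff (2 * n').+2 ('X * sigma_poly n') in r - r.[0]%:P
  else 1.

Lemma size_sigma_poly n : (size (sigma_poly n) <= (2 * n).+1)%N.
Proof.
elim: n => [|n IHn] /=; first by rewrite size_poly1.
apply: leq_trans (size_polyD _ _) _; rewrite size_polyN geq_max.
apply/andP; split; first by apply: leq_trans (size_antidiff _ _) _; rewrite mulnS.
by apply: leq_trans (size_polyC_leq1 _) _.
Qed.

Lemma fdiff_sigma_poly n : fdiff (sigma_poly n.+1) = 'X * sigma_poly n.
Proof.
rewrite /= /fdiff comp_polyB comp_polyC opprB addrA subrK -/(fdiff _).
rewrite fdiff_antidiff //; apply: leq_trans (size_polyMleq _ _) _.
by rewrite size_polyX ltnS size_sigma_poly.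
Qed.

Lemma sigma_poly_at0 n : (sigma_poly n.+1).[0] = 0.
Proof. by rewrite /= hornerD hornerN hornerC subrr. Qed.

Lemma horner_sigma_poly n j : (sigma_poly n).[j%:R] = sigma n j.
Proof.
elim: n j => [|n IHn] j; first by rewrite sigma0 hornerC.
elim: j => [|j IHj]; first by rewrite sigma_poly_at0 sigmaS0.
have := horner_fdiff (sigma_poly n.+1) j%:R.
by rewrite fdiff_sigma_poly hornerM hornerX IHn IHj natr1 sigmaSS => ->; ring.
Qed.

Section Convolution.
Variable R : comNzRingType.

(* Coefficientwise form of ((1 + tX) A) B' = A ((1 + tX) B'). *)
Lemma conv_shift (a a' b b' : nat -> R) (t : R) k :
  a' 0%N = a 0%N -> (forall i, a' i.+1 = a i.+1 + t * a i) ->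
  b 0%N = b' 0%N -> (forall i, b i.+1 = b' i.+1 + t * b' i) ->
  \sum_(i < k.+1) a' i * b' (k - i)%N = \sum_(i < k.+1) a i * b (k - i)%N.
Proof.
move=> a'0 a'S b0 bS.
set cross := \sum_(i < k) t * (a i * b' (k - i.+1)%N).
have lhsE : \sum_(i < k.+1) a' i * b' (k - i)%N =
            \sum_(i < k.+1) a i * b' (k - i)%N + cross.
  rewrite !big_ord_recl /= a'0 -addrA; congr (_ + _).
  rewrite -big_split; apply: eq_bigr => i _.
  by rewrite /bump leq0n add1n a'S mulrDl -mulrA.
have rhsE : \sum_(i < k.+1) a i * b (k - i)%N =
            \sum_(i < k.+1) a i * b' (k - i)%N + cross.
  rewrite !big_ord_recr /= subnn b0 [RHS]addrAC; congr (_ + _).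
  rewrite -big_split; apply: eq_bigr => i _.
  by rewrite -subnSK // bS mulrDr mulrCA.
by rewrite lhsE rhsE.
Qed.
End Convolution.

Definition Q_poly k : {poly rat} := (-1) ^+ k *: mirror (sigma_poly k).

Lemma horner_Q_poly k x : (Q_poly k).[x] = (-1) ^+ k * (sigma_poly k).[1 - x].
Proof. by rewrite hornerZ horner_mirror. Qed.

Lemma Q_poly_at0 k : (Q_poly k).[0] = (k == 0)%:R.
Proof.
rewrite horner_Q_poly subr0 -[1]/(1%:R) horner_sigma_poly sigma_1.
by case: k => [|k]; rewrite ?mulr1 ?mulr0.
Qed.

Lemma Q_polyS k j :
  (Q_poly k.+1).[j%:R] = (Q_poly k.+1).[j.+1%:R] + j%:R * (Q_poly k).[j.+1%:R].
Proof.
have := horner_fdiff (sigma_poly k.+1) (- j%:R).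
rewrite fdiff_sigma_poly hornerM hornerX !horner_Q_poly => diff_at.
have -> : 1 - j.+1%:R = - j%:R :> rat by rewrite -natr1; ring.
have -> : 1 - j%:R = - j%:R + 1 :> rat by ring.
rewrite -[(sigma_poly k.+1).[_ + 1]](subrK (sigma_poly k.+1).[- j%:R]).
by rewrite -diff_at exprS; ring.
Qed.

Lemma sigma_conv_Q_poly k j :
  \sum_(i < k.+1) sigma i j * (Q_poly (k - i)).[j%:R] = (k == 0)%:R.
Proof.
elim: j => [|j IHj].
  rewrite big_ord_recl sigma0 mul1r subn0 Q_poly_at0 big1 ?addr0 // => i _.
  by rewrite sigmaS0 mul0r.
rewrite -IHj; apply: (conv_shift (a := sigma^~ j) (a' := sigma^~ j.+1)
    (b := fun i => (Q_poly i).[j%:R]) (b' := fun i => (Q_poly i).[j.+1%:R]))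
  => [|i||i].
- by rewrite !sigma0.
- by rewrite sigmaSS.
- by rewrite /Q_poly !expr0 !scale1r /= rmorph1 !hornerC.
- exact: Q_polyS.
Qed.

Lemma size_Qs k j : size (Qs k j) = k.+1.
Proof. by elim: k => //= k IHk; rewrite size_rcons IHk. Qed.

Lemma nth_Qs k j i : (i <= k)%N -> nth 0 (Qs k j) i = Q i j.
Proof.
elim: k => [|k IHk]; first by rewrite leqn0 => /eqP ->.
rewrite leq_eqVlt => /orP [/eqP -> // | lt_ik].
by rewrite /= nth_rcons size_Qs lt_ik IHk.
Qed.

Lemma QS k j : Q k.+1 j = - \sum_(1 <= i < k.+2) sigma i j * Q (k.+1 - i) j.
Proof.
rewrite /Q /= nth_rcons size_Qs ltnn eqxx; congr (- _).
by apply: eq_big_nat => i /andP [i_gt0 _]; rewrite nth_Qs //; lia.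
Qed.

Lemma Q_polyE k j : Q k j = (Q_poly k).[j%:R].
Proof.
elim/ltn_ind: k => -[_ | k IHk]; first by rewrite horner_Q_poly hornerC mulr1.
have := sigma_conv_Q_poly k.+1 j.
rewrite -(big_mkord xpredT (fun i => sigma i j * (Q_poly (k.+1 - i)).[j%:R])).
rewrite big_ltn // sigma0 mul1r subn0 => /eqP; rewrite addr_eq0 => /eqP ->.
rewrite QS; congr (- _); apply: eq_big_nat => i /andP [i_gt0 _].
by rewrite IHk //; lia.
Qed.

Definition binom_poly m : {poly rat} :=
  (m`!%:R)^-1 *: \prod_(i < m) ('X - i%:R%:P).

Lemma horner_binom_poly m a : (binom_poly m).[a] = gbinom a m.
Proof.
rewrite hornerZ horner_prod mulrC; congr (_ * _).
by apply: eq_bigr => i _; rewrite hornerXsubC.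
Qed.

Lemma size_binom_poly m : (size (binom_poly m) <= m.+1)%N.
Proof.
apply: leq_trans (size_scale_leq _ _) _.
by rewrite size_prod_XsubC /index_enum -enumT -cardT card_ord.
Qed.

Lemma gbinom1_sub_gbinom0 m : gbinom 1 m - gbinom 0 m = (m == 1)%N%:R.
Proof.
rewrite /gbinom; case: m => [|[|m]]; rewrite ?big_ord0 ?big_ord1 ?subrr //.
have prod1 : \prod_(i < m.+2) (1 - i%:R : rat) = 0.
  rewrite -(big_mkord xpredT (fun i => 1 - i%:R)) big_ltn // big_ltn //.
  by rewrite mulr1n subrr mul0r mulr0.
have prod0 : \prod_(i < m.+2) (0 - i%:R : rat) = 0.
  by rewrite -(big_mkord xpredT (fun i => 0 - i%:R)) big_ltn // subrr mul0r.
by rewrite prod1 prod0 !mul0r subrr.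
Qed.

Definition Delta_poly N m : {poly rat} :=
  binom_poly m * Q_poly (N - 2 * m)
  - (-1) ^+ N *: (mirror (binom_poly m) * sigma_poly (N - 2 * m)).

Lemma Delta_polyE N m j : Delta N m j = (Delta_poly N m).[j%:R].
Proof.
rewrite hornerD hornerN (hornerZ ((-1) ^+ N)) !hornerM horner_mirror.
by rewrite -Q_polyE horner_sigma_poly !horner_binom_poly mulrA.
Qed.

Lemma mirror_Delta_poly N m :
  (2 * m <= N)%N -> mirror (Delta_poly N m) = - Delta_poly N m.
Proof.
move=> le_2m_N; have sign : (-1) ^+ N = (-1) ^+ (N - 2 * m) :> rat.
  by rewrite -{1}(subnK le_2m_N) exprD exprM sqrrN expr1n mulr1.
rewrite /Delta_poly /Q_poly sign; move: (binom_poly m) (sigma_poly _) => G S.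
by rewrite rmorphB rmorphM /= !mirrorZ rmorphM /= !mirrorK -!mul_polyC; ring.
Qed.

Lemma size_Delta_poly N m :
  (2 * m <= N)%N -> (size (Delta_poly N m) <= 2 * N + 1 - 3 * m)%N.
Proof.
move=> le_2m_N; set n := (N - 2 * m)%N.
have size_G := size_binom_poly m; have size_S := size_sigma_poly n.
have size_GS (G S : {poly rat}) :
    (size G <= m.+1)%N -> (size S <= (2 * n).+1)%N ->
    (size (G * S)%R <= 2 * N + 1 - 3 * m)%N.
  move=> sG sS; apply: leq_trans (size_polyMleq _ _) _; lia.
apply: leq_trans (size_polyD _ _) _; rewrite size_polyN geq_max.
rewrite size_GS //; last first.
  by rewrite /Q_poly (leq_trans (size_scale_leq _ _)) ?size_mirror.
by rewrite (leq_trans (size_scale_leq _ _)) // size_GS ?size_mirror.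
Qed.

Lemma Delta_at1 N m : (2 * m <= N)%N -> (N, m) != (2, 1)%N -> Delta N m 1 = 0.
Proof.
move=> le_2m_N neq_21; rewrite /Delta Q_polyE horner_Q_poly subrr.
case def_n: (N - 2 * m)%N => [|k]; last first.
  by rewrite sigma_poly_at0 sigma_1 !mulr0 subrr.
have -> : N = (2 * m)%N by lia.
rewrite sigma0 hornerC !mulr1 exprM sqrrN expr1n mul1r gbinom1_sub_gbinom0.
case: eqP => [m_eq1 | _] //.
suff N_eq2 : N = 2%N by rewrite N_eq2 m_eq1 in neq_21.
lia.
Qed.

Theorem proposition2p5 (N m : nat) :
  (2 * m <= N)%N ->
  exists s : seq rat,
    (size s <= (2 * N + 1 - 3 * m)./2)%N /\
    (forall j : nat, (0 < j)%N ->
       Delta N m j =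
       (2 * j%:R - 1) * \sum_(i < size s) s`_i * (j%:R * (j%:R - 1)) ^+ i) /\
    ((N, m) != (2, 1)%N -> s`_0 = 0).
Proof.
move=> le_2m_N.
have two_neq0 : 2 != 0 :> rat by [].
have [q size_q def_Delta] :=
  mirror_anti_comp two_neq0 (mirror_Delta_poly le_2m_N).
have DeltaE j : Delta N m j = (2 * j%:R - 1) * q.[j%:R * (j%:R - 1)].
  by rewrite Delta_polyE def_Delta hornerM horner_comp !hornerE mulr_natl.
exists q; split; [| split].
- exact: leq_trans size_q (half_leq (size_Delta_poly le_2m_N)).
- by move=> j _; rewrite DeltaE horner_coef.
- move=> neq_21; have := Delta_at1 le_2m_N neq_21.
  by rewrite DeltaE subrr mulr0 horner_coef0 mulr_natl mulr2n addrK mul1r.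
Qed.
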